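(* Let $k$ be a field of characteristic $0$, $R=k[x_1,\dots,x_n]$, $\ell=x_1+\dots+x_n$, let $d_1,\dots,d_n$ be positive integers such that $I=(x_1^{d_1},\dots,x_{n-1}^{d_{n-1}},x_n^2,\ell^{d_n})$ is minimally generated by these elements, and let $G=(x_1^{d_1},\dots,x_{n-1}^{d_{n-1}},x_n^2)\colon(\ell^{d_n})$. If $t=\sum_{i=1}^n(d_i-1)$ is odd, then $I\colon(x_n)=I+(x_n)$ and $G\colon(x_n)=G+(x_n)$; equivalently, the sequences $$0\to R/(I+(x_n))(-1)\xrightarrow{\cdot x_n}R/I\to R/(I+(x_n))\to0,\qquad 0\to R/(G+(x_n))(-1)\xrightarrow{\cdot x_n}R/G\to R/(G+(x_n))\to0$$ are exact. *)

From HB Require Import structures.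
From mathcomp Require Import all_boot all_order all_algebra.
From mathcomp Require Import mpoly.
Set Implicit Arguments. Unset Strict Implicit. Unset Printing Implicit Defensive.
Import GRing.Theory.
Local Open Scope ring_scope.

Section IdealDefs.
Variable (k : fieldType) (n : nat).
Local Notation R := {mpoly k[n]}.

Definition in_ideal (s : seq R) (f : R) : Prop :=
  exists c : seq R, f = \sum_(i < size s) c`_i * s`_i.

Definition minimal_gens (s : seq R) : Prop :=
  forall i : nat, (i < size s)%N -> ~ in_ideal (take i s ++ drop i.+1 s) s`_i.

Definition colon (J : R -> Prop) (h : R) : R -> Prop := fun f => J (f * h).
Definition add_principal (J : R -> Prop) (h : R) : R -> Prop :=
  fun f => exists a b : R, J a /\ f = a + b * h.

Definition ideal_eq (J1 J2 : R -> Prop) : Prop := forall f, J1 f <-> J2 f.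
End IdealDefs.

(* Setting: the paper's n variables are here n.+1 variables indexed by 'I_n.+1;
   the paper's x_i is 'X_(i-1), its last variable x_n is 'X_ord_max. *)
Section Gens.
Variable (k : fieldType) (n : nat) (d : 'I_n.+1 -> nat).
Local Notation R := {mpoly k[n.+1]}.

Definition ell : R := \sum_(i < n.+1) 'X_i.

Definition J_gens : seq R :=
  [seq 'X_(widen_ord (leqnSn n) i) ^+ d (widen_ord (leqnSn n) i) | i <- enum 'I_n]
  ++ [:: 'X_ord_max ^+ 2].

Definition I_gens : seq R := rcons J_gens (ell ^+ d ord_max).

Definition Iideal : R -> Prop := in_ideal I_gens.
Definition Gideal : R -> Prop := colon (in_ideal J_gens) (ell ^+ d ord_max).
End Gens.

From HB Require Import structures.
From mathcomp Require Import all_boot all_order all_algebra.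
From mathcomp Require Import mpoly ring.
Set Implicit Arguments. Unset Strict Implicit. Unset Printing Implicit Defensive.
Import GRing.Theory.
Local Open Scope ring_scope.

(* Let m be the sum of the variables x_i with P i, let M = (x_i^(d_i) : P i), and let z be
   another variable, so that ell = m + z.  Multiplication by m, the operator
   F = sum_i ((d_i - 1) d/dx_i - x_i d^2/dx_i^2) and the diagonal operator H with weight
   sum_i (2 a_i - (d_i - 1)) on x^a satisfy [F, m] = -H and preserve M: they form an
   sl_2-triple acting on k[x]/M.  Hence F (m^(c+1) p) = m^(c+1) F p - (c+1) m^c (H + c) p,
   and when H + c is invertible (characteristic 0 and sum (d_i - 1) + c odd) this gives
   m^c (M : m^(c+1)) <= M + (m^(c+1)).  Setting z = 0 in a relation z f in I (resp.
   z f ell^(c+1) in M + (z^2)) produces an element of M : m^(c+1), and expanding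
   ell^(c+1) = m^(c+1) + (c+1) z m^c modulo z^2 then shows f in I + (z) (resp. G + (z)). *)

Section DiagonalOperator.
Variables (k : comNzRingType) (N : nat).
Local Notation R := {mpoly k[N]}.
Implicit Types (p q : R) (g : 'X_{1..N} -> k).

Definition mdiag g p : R := \sum_(m <- msupp p) (g m * p@_m) *: 'X_[m].

Lemma mcoeff_mdiag g p m : (mdiag g p)@_m = g m * p@_m.
Proof.
rewrite /mdiag (big_morph (mcoeff m) (mcoeffD m) (mcoeff0 _ m)).
under eq_bigr do rewrite mcoeffZ mcoeffX.
case: (boolP (m \in msupp p)) => Hm.
  rewrite (bigD1_seq m) //= ?msupp_uniq // eqxx mulr1 big1 ?addr0 //.
  by move=> a /negbTE; rewrite eq_sym => ->; rewrite mulr0.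
rewrite big_seq big1; first by move: Hm; rewrite mcoeff_msupp negbK => /eqP ->; rewrite mulr0.
by move=> a Ha; case: eqP => [Em|_]; [move: Hm; rewrite -Em Ha | rewrite mulr0].
Qed.

Lemma mdiag_is_linear g : linear (mdiag g).
Proof.
by move=> c p q; apply/mpolyP => m; rewrite mcoeffD mcoeffZ !mcoeff_mdiag mcoeffD mcoeffZ; ring.
Qed.

HB.instance Definition _ g := GRing.isLinear.Build k R R _ (mdiag g) (mdiag_is_linear g).

Lemma eq_mdiag g g' p : g =1 g' -> mdiag g p = mdiag g' p.
Proof. by move=> eq_g; apply/mpolyP => m; rewrite !mcoeff_mdiag eq_g. Qed.

Lemma mdiagX g m : mdiag g 'X_[m] = g m *: 'X_[m].
Proof.
apply/mpolyP => a; rewrite mcoeff_mdiag mcoeffZ mcoeffX.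
by case: eqP => [->|]; rewrite ?mulr0 ?mulr1.
Qed.

Lemma mdiag_mulX g q m : mdiag g (q * 'X_[m]) = mdiag (fun a => g (a + m)%MM) q * 'X_[m].
Proof.
elim/mpolyind: q => [|c a p _ _ IH]; first by rewrite mul0r !raddf0 mul0r.
rewrite mulrDl !raddfD /= IH mulrDl; congr (_ + _).
by rewrite -scalerAl -mpolyXD !linearZ /= !mdiagX -!scalerAl -mpolyXD.
Qed.

Lemma mderiv_var (i j : 'I_N) : ('X_i : R)^`M(j) = (i == j)%:R.
Proof.
rewrite mderivX mnm1E; case: eqP => [->|_]; last by rewrite scale0r.
rewrite (_ : (U_(j) - U_(j))%MM = 0%MM) ?mpolyX0 ?scale1r //.
by apply/mnmP => l; rewrite mnmBE subnn mnm0E.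
Qed.

Lemma mderivXn_neq (i j : 'I_N) e : i != j -> (('X_i : R) ^+ e)^`M(j) = 0.
Proof. by move=> /negbTE ij; rewrite mpolyXn mderivX mulmnE mnm1E ij mul0n scale0r. Qed.

Lemma mulX_mderiv (i : 'I_N) p : 'X_i * p^`M(i) = mdiag (fun a => (a i)%:R) p.
Proof.
elim/mpolyind: p => [|c m p _ _ IH]; first by rewrite raddf0 mulr0 raddf0.
rewrite !raddfD /= mulrDr IH; congr (_ + _).
rewrite !linearZ /= mderivX mdiagX -scalerAr; congr (_ *: _).
case: (posnP (m i)) => Hm; first by rewrite Hm !scale0r mulr0.
rewrite -scalerAr -mpolyXD addmC submK //; apply/mnm_lepP => j; rewrite mnm1E.
by case: eqP => [<-|].
Qed.

Lemma mulX_mderivXn (i : 'I_N) e : 'X_i * (('X_i : R) ^+ e)^`M(i) = e%:R * 'X_i ^+ e.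
Proof.
by rewrite mulX_mderiv mpolyXn mdiagX mulmnE mnm1E eqxx mul1n -mpolyXn scaler_nat mulr_natl.
Qed.

End DiagonalOperator.

Lemma pchar0_eqr_nat (F : fieldType) m n :
  [pchar F] =i pred0 -> (m%:R == n%:R :> F) = (m == n).
Proof.
move=> /pcharf0P F0; wlog le_mn : m n / (m <= n)%N => [W|].
  by case/orP: (leq_total m n) => /W //; rewrite eq_sym => ->; rewrite eq_sym.
by rewrite eq_sym -subr_eq0 -natrB // F0 subn_eq0 eqn_leq le_mn.
Qed.

Section Lefschetz.
Variables (k : fieldType) (N : nat) (P : pred 'I_N) (d : 'I_N -> nat).
Local Notation R := {mpoly k[N]}.

Definition Xsum : R := \sum_(i | P i) 'X_i.

Definition Xpow_ideal (p : R) : Prop :=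
  exists c : 'I_N -> R, p = \sum_(i | P i) c i * 'X_i ^+ d i.

Definition sl2_weight (a : 'X_{1..N}) : k :=
  \sum_(i | P i) ((a i)%:R *+ 2 - ((d i)%:R - 1)).

Definition sl2_lower_at (i : 'I_N) (p : R) : R :=
  ((d i)%:R - 1) * p^`M(i) - 'X_i * p^`M(i)^`M(i).

Definition sl2_lower (p : R) : R := \sum_(i | P i) sl2_lower_at i p.

Lemma sl2_lower_is_additive : {morph sl2_lower : p q / p - q}.
Proof.
move=> p q; rewrite /sl2_lower -sumrB; apply: eq_bigr => i _.
by rewrite /sl2_lower_at !raddfB /=; ring.
Qed.

HB.instance Definition _ :=
  GRing.isZmodMorphism.Build R R sl2_lower sl2_lower_is_additive.

Lemma Xpow_idealD p q : Xpow_ideal p -> Xpow_ideal q -> Xpow_ideal (p + q).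
Proof.
case=> c -> [c' ->]; exists (fun i => c i + c' i).
by rewrite -big_split; apply: eq_bigr => i _; rewrite mulrDl.
Qed.

Lemma Xpow_idealN p : Xpow_ideal p -> Xpow_ideal (- p).
Proof.
case=> c ->; exists (fun i => - c i).
by rewrite -sumrN; apply: eq_bigr => i _; rewrite mulNr.
Qed.

Lemma Xpow_idealMl r p : Xpow_ideal p -> Xpow_ideal (r * p).
Proof.
case=> c ->; exists (fun i => r * c i).
by rewrite mulr_sumr; apply: eq_bigr => i _; rewrite mulrA.
Qed.

Lemma Xpow_ideal_mdiag g p : Xpow_ideal p -> Xpow_ideal (mdiag g p).
Proof.
case=> c ->; rewrite raddf_sum /=.
exists (fun i => mdiag (fun a => g (a + U_(i) *+ d i)%MM) (c i)).
by apply: eq_bigr => i _; rewrite mpolyXn mdiag_mulX.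
Qed.

Lemma sl2_lower_atXn_neq i j e c : j != i ->
  sl2_lower_at i (c * 'X_j ^+ e) = sl2_lower_at i c * 'X_j ^+ e.
Proof.
move=> ji; rewrite /sl2_lower_at !mderivM mderivXn_neq // mulr0 addr0.
by rewrite mderivM mderivXn_neq // mulr0 addr0; ring.
Qed.

Lemma sl2_lower_atXn i c :
  sl2_lower_at i (c * 'X_i ^+ d i) =
  (sl2_lower_at i c - (d i)%:R *+ 2 * c^`M(i)) * 'X_i ^+ d i.
Proof.
set Xd := 'X_i ^+ d i.
have E1 : 'X_i * Xd^`M(i) = (d i)%:R * Xd by apply: mulX_mderivXn.
have E2 : 'X_i * Xd^`M(i)^`M(i) = ((d i)%:R - 1) * Xd^`M(i).
  have := congr1 (mderiv i) E1.
  rewrite !mderivM mderiv_var eqxx /= -mpolyC_nat mderivC mul0r add0r mpolyC_nat => E.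
  by rewrite mulrBl -E; ring.
transitivity ((sl2_lower_at i c - (d i)%:R *+ 2 * c^`M(i)) * Xd
  - c^`M(i) *+ 2 * ('X_i * Xd^`M(i) - (d i)%:R * Xd)
  - c * ('X_i * Xd^`M(i)^`M(i) - ((d i)%:R - 1) * Xd^`M(i))).
  by rewrite /sl2_lower_at !(mderivM, mderivD); ring.
by rewrite E1 E2 !subrr !mulr0 !subr0.
Qed.

Lemma sl2_lower_mulXn c j : P j ->
  sl2_lower (c * 'X_j ^+ d j) = (sl2_lower c - (d j)%:R *+ 2 * c^`M(j)) * 'X_j ^+ d j.
Proof.
move=> Pj; rewrite /sl2_lower !(bigD1 j Pj) /= sl2_lower_atXn.
rewrite (eq_bigr (fun i => sl2_lower_at i c * 'X_j ^+ d j)) -?mulr_suml; first by ring.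
by move=> i /andP[_ ij]; rewrite sl2_lower_atXn_neq // eq_sym.
Qed.

Lemma sl2_lower_Xpow_ideal p : Xpow_ideal p -> Xpow_ideal (sl2_lower p).
Proof.
case=> c ->; rewrite raddf_sum /=.
exists (fun i => sl2_lower (c i) - (d i)%:R *+ 2 * (c i)^`M(i)).
by apply: eq_bigr => j Pj; rewrite sl2_lower_mulXn.
Qed.

Lemma mderiv_Xsum i : P i -> Xsum^`M(i) = 1.
Proof.
move=> Pi; rewrite raddf_sum (bigD1 i) //= mderiv_var eqxx big1 ?addr0 // => j.
by rewrite mderiv_var => /andP[_ /negbTE ->].
Qed.

Lemma sl2_weight_addU a i : P i -> sl2_weight (a + U_(i))%MM = sl2_weight a + 2.
Proof.
move=> Pi; rewrite /sl2_weight (bigD1 i) //= [in RHS](bigD1 i) //=.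
rewrite mnmDE mnm1E eqxx /= natrD mulrnDl.
rewrite (eq_bigr (fun j => (a j)%:R *+ 2 - ((d j)%:R - 1))); first by ring.
by move=> j /andP[_ /negbTE ij]; rewrite mnmDE mnm1E eq_sym ij addn0.
Qed.

Lemma mdiag_Xsum (phi : k -> k) q :
  mdiag (fun a => phi (sl2_weight a)) (Xsum * q) =
  Xsum * mdiag (fun a => phi (sl2_weight a + 2)) q.
Proof.
rewrite /Xsum !mulr_suml raddf_sum /=; apply: eq_bigr => i Pi.
rewrite mulrC mdiag_mulX mulrC; congr (_ * _).
by apply: eq_mdiag => a; rewrite sl2_weight_addU.
Qed.

Lemma mdiag_Xsum_pow j (phi : k -> k) q :
  mdiag (fun a => phi (sl2_weight a)) (Xsum ^+ j * q) =
  Xsum ^+ j * mdiag (fun a => phi (sl2_weight a + j%:R *+ 2)) q.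
Proof.
elim: j phi => [|j IH] phi.
  by rewrite expr0 !mul1r; apply: eq_mdiag => a; rewrite mulr0n mul0rn addr0.
rewrite exprS -mulrA mdiag_Xsum (IH (fun x => phi (x + 2))) mulrA.
by congr (_ * _); apply: eq_mdiag => a; congr phi; ring.
Qed.

Lemma mdiag_sl2_weight q :
  mdiag sl2_weight q = \sum_(i | P i) ('X_i * q^`M(i) *+ 2 - ((d i)%:R - 1) * q).
Proof.
apply/mpolyP => a; rewrite mcoeff_mdiag raddf_sum /= /sl2_weight mulr_suml.
apply: eq_bigr => i _; rewrite mcoeffB mcoeffMn mulX_mderiv mcoeff_mdiag.
by rewrite -mpolyC_nat -mpolyC1 -raddfB mcoeffCM; ring.
Qed.

Lemma sl2_lower_mulXsum q : sl2_lower (Xsum * q) = Xsum * sl2_lower q - mdiag sl2_weight q.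
Proof.
rewrite /sl2_lower mdiag_sl2_weight mulr_sumr -sumrB; apply: eq_bigr => i Pi.
rewrite /sl2_lower_at !(mderivM, mderivD) mderiv_Xsum // -mpolyC1 mderivC; ring.
Qed.

Lemma sl2_lower_mulXsum_pow j q :
  sl2_lower (Xsum ^+ j.+1 * q) =
  Xsum ^+ j.+1 * sl2_lower q - j.+1%:R * Xsum ^+ j * mdiag (fun a => sl2_weight a + j%:R) q.
Proof.
elim: j q => [|j IH] q.
  rewrite expr1 sl2_lower_mulXsum expr0 mulr1 mul1r.
  by under [in RHS]eq_mdiag do rewrite addr0.
have Hw : mdiag sl2_weight (Xsum ^+ j.+1 * q) =
    Xsum ^+ j.+1 * mdiag (fun a => sl2_weight a + j.+1%:R *+ 2) q.
  exact: (mdiag_Xsum_pow j.+1 id).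
have mdiag_weight_shift : mdiag (fun a => sl2_weight a + j.+1%:R *+ 2) q =
  j.+2%:R * mdiag (fun a => sl2_weight a + j.+1%:R) q
  - j.+1%:R * mdiag (fun a => sl2_weight a + j%:R) q.
  by apply/mpolyP => a; rewrite mcoeffB !mulr_natl !mcoeffMn !mcoeff_mdiag; ring.
rewrite exprS -mulrA sl2_lower_mulXsum IH Hw mdiag_weight_shift !exprS.
by move: (Xsum ^+ j) => X; ring.
Qed.

Lemma Xsum_pow_colon c p :
  c.+1%:R != 0 :> k -> (forall a, sl2_weight a + c%:R != 0) ->
  Xpow_ideal (Xsum ^+ c.+1 * p) ->
  exists v w, Xpow_ideal v /\ Xsum ^+ c * p = v + w * Xsum ^+ c.+1.
Proof.
move=> c1_neq0 w_neq0 Mp.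
pose p' := mdiag (fun a => (c.+1%:R * (sl2_weight a + c%:R))^-1) p.
have Mp' : Xpow_ideal (Xsum ^+ c.+1 * p').
  have := mdiag_Xsum_pow c.+1 (fun x => (c.+1%:R * (x - c.+1%:R *+ 2 + c%:R))^-1) p.
  under [in RHS]eq_mdiag do rewrite addrK.
  by move <-; apply: Xpow_ideal_mdiag.
have pE : c.+1%:R * mdiag (fun a => sl2_weight a + c%:R) p' = p.
  apply/mpolyP => a; rewrite mulr_natl mcoeffMn !mcoeff_mdiag.
  by field; rewrite w_neq0 -mulrS.
exists (- sl2_lower (Xsum ^+ c.+1 * p')), (sl2_lower p'); split.
  by apply/Xpow_idealN/sl2_lower_Xpow_ideal.
rewrite sl2_lower_mulXsum_pow -{1}pE !exprS.
by move: (Xsum ^+ c) => X; ring.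
Qed.

Lemma sl2_weight_add_neq0 c a :
  [pchar k] =i pred0 -> (forall i, P i -> 0 < d i)%N ->
  odd (\sum_(i | P i) (d i - 1) + c) -> sl2_weight a + c%:R != 0.
Proof.
move=> k0 d_gt0 t_odd.
have -> : sl2_weight a = ((\sum_(i | P i) a i) * 2)%:R - (\sum_(i | P i) (d i - 1))%:R.
  rewrite /sl2_weight sumrB natrM mulr_natr !natr_sum -sumrMnl; congr (_ - _).
  by apply: eq_bigr => i Pi; rewrite natrB ?d_gt0.
rewrite addrAC -natrD subr_eq0 pchar0_eqr_nat //; apply/eqP => E.
by move: t_odd; rewrite -E -addnA addnn oddD odd_double oddM andbF.
Qed.

End Lefschetz.

Lemma exprSD_mod_sqr (T : comPzRingType) (x y : T) j :
  exists g, (x + y) ^+ j.+1 = x ^+ j.+1 + y * (j.+1%:R * x ^+ j + y * g).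
Proof.
elim: j => [|j [g gE]]; first by exists 0; rewrite !expr1 expr0; ring.
exists (x * g + j.+1%:R * x ^+ j + y * g).
by rewrite exprS gE !exprS; move: (x ^+ j) => X; ring.
Qed.

Section SubstZero.
Variables (k : comNzRingType) (N : nat).
Local Notation R := {mpoly k[N]}.

Lemma mpoly_ring_ind (Q : R -> Prop) :
  (forall c, Q c%:MP) -> (forall i, Q 'X_i) ->
  (forall p q, Q p -> Q q -> Q (p + q)) -> (forall p q, Q p -> Q q -> Q (p * q)) ->
  forall p, Q p.
Proof.
move=> QC QX QD QM p; elim/mpolyind: p => [|c m p _ _ IH].
  by have := QC 0; rewrite mpolyC0.
apply: (QD) => //; rewrite -mul_mpolyC; apply: (QM) => //.
have Q1 : Q 1 by rewrite -mpolyC1.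
rewrite mpolyXE_id; apply: big_ind => // i _.
by elim: (m i) => [|e IHe]; rewrite ?expr0 // exprS; apply: QM.
Qed.

Lemma mpolyX_neq0 i : ('X_i : R) != 0.
Proof.
apply/eqP => /(congr1 (mcoeff U_(i))).
by rewrite mcoeffX eqxx mcoeff0 => /eqP; rewrite oner_eq0.
Qed.

Variable z : 'I_N.

Definition subst0 : {rmorphism R -> R} :=
  mmap (@mpolyC N k) (fun i => if i == z then 0 else 'X_i).

Lemma subst0X i : subst0 'X_i = if i == z then 0 else 'X_i.
Proof. by rewrite /= mmapX mmap1U. Qed.

Lemma subst0_split p : exists q, p = subst0 p + 'X_z * q.
Proof.
elim/mpoly_ring_ind: p => [c|i|p q [p1 {1}->] [q1 {1}->]|p q [p1 {1}->] [q1 {1}->]].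
- by exists 0; rewrite /= mmapC mulr0 addr0.
- rewrite subst0X; case: eqP => [->|_]; first by exists 1; rewrite add0r mulr1.
  by exists 0; rewrite mulr0 addr0.
- by exists (p1 + q1); rewrite rmorphD; ring.
- by exists (p1 * subst0 q + subst0 p * q1 + 'X_z * p1 * q1); rewrite rmorphM; ring.
Qed.

End SubstZero.
Arguments subst0 {k N} z.

Section ColonByVariable.
Variables (k : fieldType) (N : nat) (P : pred 'I_N) (d : 'I_N -> nat).
Variables (z : 'I_N) (c : nat).
Hypothesis Pz : ~~ P z.
Hypothesis k0 : [pchar k] =i pred0.
Hypothesis d_gt0 : forall i, P i -> (0 < d i)%N.
Hypothesis t_odd : odd (\sum_(i | P i) (d i - 1) + c).
Local Notation R := {mpoly k[N]}.
Local Notation m := (@Xsum k N P).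
Local Notation M := (@Xpow_ideal k N P d).
Local Notation Z := ('X_z : R).
Local Notation J := (add_principal M (Z ^+ 2)).
Local Notation ell := (m + Z).
Local Notation sub0 := (@subst0 k N z).

Lemma subst0_var i : P i -> sub0 'X_i = 'X_i.
Proof. by move=> Pi; rewrite subst0X; case: eqP Pz => // <-; rewrite Pi. Qed.

Lemma subst0Z : sub0 Z = 0.
Proof. by rewrite subst0X eqxx. Qed.

Lemma subst0_Xsum : sub0 m = m.
Proof. by rewrite rmorph_sum; apply: eq_bigr => i; apply: subst0_var. Qed.

Lemma subst0_ell : sub0 ell = m.
Proof. by rewrite rmorphD subst0_Xsum subst0Z addr0. Qed.

Lemma Xpow_ideal_subst0 u : M u -> M (sub0 u).
Proof.
case=> a ->; exists (fun i => sub0 (a i)); rewrite rmorph_sum.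
by apply: eq_bigr => i Pi; rewrite rmorphM rmorphXn subst0_var.
Qed.

Lemma Xpow_ideal_split u : M u -> exists u1, M u1 /\ u = sub0 u + Z * u1.
Proof.
case=> a ->; have [q qE] := fin_all_exists (fun i => subst0_split z (a i)).
exists (\sum_(i | P i) q i * 'X_i ^+ d i); split; first by exists q.
rewrite rmorph_sum mulr_sumr -big_split; apply: eq_bigr => i Pi /=.
by rewrite rmorphM rmorphXn subst0_var // {1}(qE i); ring.
Qed.

Lemma Xsum_pow_colon_odd p :
  M (m ^+ c.+1 * p) -> exists v w, M v /\ m ^+ c * p = v + w * m ^+ c.+1.
Proof.
apply: Xsum_pow_colon; first by move/pcharf0P: k0 => ->.
by move=> a; apply: sl2_weight_add_neq0.
Qed.

Lemma colon_add_principal_X :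
  ideal_eq (colon (add_principal J (ell ^+ c.+1)) Z)
           (add_principal (add_principal J (ell ^+ c.+1)) Z).
Proof.
move=> f; split; last first.
  case=> _ [b [[_ [e' [[u [e [Mu ->]]] ->]]] ->]].
  exists (u * Z + (e * Z + b) * Z ^+ 2), (e' * Z); split; last by rewrite /=; ring.
  by exists (u * Z), (e * Z + b); split; [rewrite mulrC; apply: Xpow_idealMl | ring].
case=> _ [e' [[u [e [Mu ->]]] fZ]].
have [g ellE] := exprSD_mod_sqr m Z c.
have su : sub0 u = - (sub0 e' * m ^+ c.+1).
  have := congr1 sub0 fZ; rewrite !rmorphD !rmorphM !rmorphXn subst0Z subst0_ell.
  by rewrite !mul0r !mulr0 addr0 => /esym/eqP; rewrite addr_eq0 => /eqP.
have [v [w [Mv vE]]] : exists v w, M v /\ m ^+ c * sub0 e' = v + w * m ^+ c.+1.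
  apply: Xsum_pow_colon_odd; rewrite mulrC -[_ * _]opprK -su.
  exact/Xpow_idealN/Xpow_ideal_subst0.
have [u1 [Mu1 uE]] := Xpow_ideal_split Mu.
have [b1 e'E] := subst0_split z e'.
set L := c.+1%:R * m ^+ c + Z * g.
exists (u1 + c.+1%:R * v + (c.+1%:R * w + b1) * ell ^+ c.+1).
exists (e + g * sub0 e' - c.+1%:R * w * L).
split.
  exists (u1 + c.+1%:R * v), (c.+1%:R * w + b1); split => //.
  exists (u1 + c.+1%:R * v), 0; split; last by rewrite mul0r addr0.
  by apply: Xpow_idealD => //; apply: Xpow_idealMl.
apply: (mulIf (mpolyX_neq0 k z)); rewrite fZ ellE -/L.
have {}vE : v = m ^+ c * sub0 e' - w * m ^+ c.+1 by rewrite vE addrK.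
move: (sub0 u) (sub0 e') su vE uE e'E => su se -> -> -> ->.
by rewrite /L !exprS; move: (m ^+ c) => X; ring.
Qed.

Lemma colon_colon_X :
  ideal_eq (colon (colon J (ell ^+ c.+1)) Z) (add_principal (colon J (ell ^+ c.+1)) Z).
Proof.
move=> f; split; last first.
  case=> a [b [[u [e [Mu aE]]] ->]].
  exists (u * Z), (e * Z + b * ell ^+ c.+1); split; first by rewrite mulrC; apply: Xpow_idealMl.
  transitivity ((a * ell ^+ c.+1) * Z + b * Z ^+ 2 * ell ^+ c.+1); first by ring.
  by rewrite aE; ring.
case=> u [e [Mu fZ]].
have [g ellE] := exprSD_mod_sqr m Z c.
have [u1 [Mu1 uE]] := Xpow_ideal_split Mu.
have su0 : sub0 u = 0.
  have := congr1 sub0 fZ; rewrite !rmorphD !rmorphM !rmorphXn subst0Z.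
  by rewrite !mulr0 !mul0r addr0.
have f_ell : f * ell ^+ c.+1 = u1 + e * Z.
  by apply: (mulIf (mpolyX_neq0 k z)); rewrite mulrAC fZ uE su0 add0r; ring.
have su1 : sub0 f * m ^+ c.+1 = sub0 u1.
  have := congr1 sub0 f_ell; rewrite !rmorphD !rmorphM !rmorphXn subst0_ell subst0Z.
  by rewrite mulr0 addr0.
have [|v [w [Mv vE]]] := Xsum_pow_colon_odd (p := sub0 f).
  by rewrite mulrC su1; apply: Xpow_ideal_subst0.
have [q fE] := subst0_split z f.
set L := c.+1%:R * m ^+ c + Z * g.
exists (sub0 f - c.+1%:R * Z * w), (q + c.+1%:R * w); split; last by rewrite {1}fE; ring.
exists (sub0 u1 + Z * (c.+1%:R * v)), (sub0 f * g - c.+1%:R * w * L); split.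
  by apply: Xpow_idealD; [apply: Xpow_ideal_subst0 | do 2 apply: Xpow_idealMl].
have {}vE : v = m ^+ c * sub0 f - w * m ^+ c.+1 by rewrite vE addrK.
rewrite -su1 vE ellE -/L; move: (sub0 f) => sf.
by rewrite /L !exprS; move: (m ^+ c) => X; ring.
Qed.

End ColonByVariable.

Section IdealEquivalence.
Variables (k : fieldType) (n : nat).
Local Notation R := {mpoly k[n]}.
Implicit Types (s : seq R).

Lemma eq_add_principal (J J' : R -> Prop) h :
  ideal_eq J J' -> ideal_eq (add_principal J h) (add_principal J' h).
Proof. by move=> JJ' f; split=> -[a [b [/JJ' Ja ->]]]; exists a, b. Qed.

Lemma eq_colon (J J' : R -> Prop) h : ideal_eq J J' -> ideal_eq (colon J h) (colon J' h).
Proof. by move=> JJ' f; apply: JJ'. Qed.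

Lemma eq_colon_add_principal (J J' : R -> Prop) h : ideal_eq J J' ->
  ideal_eq (colon J' h) (add_principal J' h) -> ideal_eq (colon J h) (add_principal J h).
Proof.
move=> JJ' E' f; have Eadd := eq_add_principal h JJ' f; have Ecol := eq_colon h JJ' f.
by split=> [/Ecol/E'/Eadd | /Eadd/E'/Ecol].
Qed.

Lemma in_idealE s f :
  in_ideal s f <-> exists c : nat -> R, f = \sum_(0 <= i < size s) c i * s`_i.
Proof.
split; first by case=> c ->; exists (fun i => c`_i); rewrite big_mkord.
case=> c ->; exists (mkseq c (size s)); rewrite big_mkord.
by apply: eq_bigr => i _; rewrite nth_mkseq.
Qed.

Lemma in_ideal_rcons s a : ideal_eq (in_ideal (rcons s a)) (add_principal (in_ideal s) a).
Proof.
have sum_rcons (c : nat -> R) : \sum_(0 <= i < size (rcons s a)) c i * (rcons s a)`_i =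
    \sum_(0 <= i < size s) c i * s`_i + c (size s) * a.
  rewrite size_rcons big_nat_recr //= nth_rcons ltnn eqxx; congr (_ + _).
  by apply: eq_big_nat => i /andP[_ lt_is]; rewrite nth_rcons lt_is.
move=> f; rewrite in_idealE; split.
  case=> c ->; rewrite sum_rcons; exists (\sum_(0 <= i < size s) c i * s`_i), (c (size s)).
  by split=> //; apply/in_idealE; exists c.
case=> _ [e [/in_idealE [c ->] ->]]; exists (fun i => if (i < size s)%N then c i else e).
rewrite sum_rcons ltnn; congr (_ + _).
by apply: eq_big_nat => i /andP[_ ->].
Qed.

Lemma in_ideal_enum_ord m (g : 'I_m -> R) f :
  in_ideal [seq g i | i <- enum 'I_m] f <-> exists c : 'I_m -> R, f = \sum_(i < m) c i * g i.
Proof.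
rewrite in_idealE size_map size_enum_ord; split.
  case=> c ->; exists (fun i => c i); rewrite big_mkord; apply: eq_bigr => i _.
  by rewrite (nth_map i) ?size_enum_ord // nth_ord_enum.
case=> c ->; exists (fun j => oapp c 0 (insub j)); rewrite big_mkord.
by apply: eq_bigr => i _; rewrite valK /= (nth_map i) ?size_enum_ord // nth_ord_enum.
Qed.

End IdealEquivalence.

Section Application.
Variables (k : fieldType) (n : nat) (d : 'I_n.+1 -> nat).
Local Notation P := (fun i : 'I_n.+1 => (i < n)%N).
Local Notation wi := (widen_ord (leqnSn n)).

Lemma in_Xpow_gens :
  ideal_eq (in_ideal [seq 'X_(wi i) ^+ d (wi i) | i <- enum 'I_n]) (@Xpow_ideal k _ P d).
Proof.
move=> f; rewrite in_ideal_enum_ord; split=> -[c ->].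
  exists (fun j => oapp c 0 (insub (val j))); rewrite /= big_ord_narrow.
  by apply: eq_bigr => i _; rewrite /= valK.
by exists (fun i => c (wi i)); rewrite /= big_ord_narrow.
Qed.

Lemma in_J_gens :
  ideal_eq (in_ideal (@J_gens k n d)) (add_principal (@Xpow_ideal k _ P d) ('X_ord_max ^+ 2)).
Proof.
move=> f; have E := eq_add_principal ('X_ord_max ^+ 2) in_Xpow_gens f.
by rewrite /J_gens cats1; split=> [/in_ideal_rcons/E | /E/in_ideal_rcons].
Qed.

Lemma ellE : @ell k n = @Xsum k _ P + 'X_ord_max.
Proof. by rewrite /ell big_ord_recr /Xsum /= big_ord_narrow. Qed.

End Application.

Theorem mainTheorem11 (k : fieldType) (n : nat) (d : 'I_n.+1 -> nat) :
  [pchar k] =i pred0 ->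
  (forall i, (0 < d i)%N) ->
  minimal_gens (@I_gens k n d) ->
  odd (\sum_(i < n.+1) (d i - 1)) ->
  ideal_eq (colon (@Iideal k n d) 'X_ord_max) (add_principal (@Iideal k n d) 'X_ord_max) /\
  ideal_eq (colon (@Gideal k n d) 'X_ord_max) (add_principal (@Gideal k n d) 'X_ord_max).
Proof.
move=> k0 d_gt0 _ t_odd.
have dE : d ord_max = (d ord_max).-1.+1 by rewrite prednK.
have tc_odd : odd (\sum_(i < n.+1 | (i < n)%N) (d i - 1) + (d ord_max).-1).
  by move: t_odd; rewrite big_ord_recr /= -subn1 big_ord_narrow.
have Pz : ~~ (@ord_max n < n)%N by rewrite /= ltnn.
rewrite /Iideal /Gideal /I_gens ellE dE; split.
  apply: eq_colon_add_principal; first exact: in_ideal_rcons.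
  apply: eq_colon_add_principal; first exact: (eq_add_principal _ (@in_J_gens k n d)).
  exact: colon_add_principal_X.
apply: eq_colon_add_principal; first exact: (eq_colon _ (@in_J_gens k n d)).
exact: colon_colon_X.
Qed.
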